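(* The parent relation of the Explicit Tree $\mathbf T$ is well defined and $\mathbf T$ is a directed spanning tree of $\mathbf G$ rooted at $\mathcal R$ (for every $\mathcal U\neq\mathcal R$, $(parent(\mathcal U),\mathcal U)$ is an arc of $\mathbf G$, and the parent relation has no cycles).
   Context: Let $k\ge 2$, $\Sigma=\{0,\dots,k-1\}$ with arithmetic modulo $k$, $n\ge 1$, $s=s[0]\cdots s[n-1]\in\Sigma^n$. For an integer $j$, $ICR_j(s)=s[1]\cdots s[n-1](s[0]+j)$. Let $\mathbf N$ be the set of cycles (orbits) of the permutation $ICR_1$ of $\Sigma^n$. Let $\mathbf G$ be the directed graph on $\mathbf N$ with an arc $(\mathcal U,\mathcal V)$ iff some $s\in\mathcal U$ has $ICR_0(s)\in\mathcal V$. The difference array $\Delta(s)\in\Sigma^n$ is $\Delta(s)[i]=s[i-1]-s[i]$ for $0<i<n$ and $\Delta(s)[0]=s[n-1]-s[0]-1$ (mod $k$). Two strings $s,t$ lie in the same cycle iff $\Delta(s)$ and $\Delta(t)$ are cyclic rotations of each other; for a cycle $\mathcal U$, $\Delta(\mathcal U)$ denotes the lexicographically minimal rotation of $\Delta(s)$ for any $s\in\mathcal U$ (lexicographic order using $0<1<\dots<k-1$). Explicit Tree $\mathbf T$: the root $\mathcal R$ is the cycle of $0^n$; for $\mathcal U\in\mathbf N\setminus\{\mathcal R\}$, let $i$ be the least index with $\Delta(\mathcal U)[i]\ne0$, let $A$ be obtained from $\Delta(\mathcal U)$ by decrementing entry $i$ and incrementing entry $i+1$ (mod $k$), and let $parent(\mathcal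 U)$ be the unique cycle $\mathcal V$ with $\Delta(\mathcal V)$ equal to $A$ up to rotation. *)

From mathcomp Require Import all_boot all_algebra.
Set Implicit Arguments. Unset Strict Implicit. Unset Printing Implicit Defensive.
Import GRing.Theory.
Local Open Scope ring_scope.

Section ExplicitTree.
Variables (k m : nat).
Local Notation n := m.+1.
Definition str := {ffun 'I_n -> 'Z_k}.

Definition ICR (j : 'Z_k) (s : str) : str :=
  [ffun i : 'I_n => if (i < m)%N then s (inord i.+1) else s ord0 + j].

Definition cycle_of (s : str) : {set str} := [set t | fconnect (ICR 1) s t].

Definition Ncycles : {set {set str}} := [set cycle_of s | s in [set: str]].

Definition Root : {set str} := cycle_of [ffun => 0].

Definition Garc (U V : {set str}) : bool := [exists s in U, ICR 0 s \in V].

Definition Delta (s : str) : seq 'Z_k :=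
  [seq (if i == 0%N then s (inord m) - s ord0 - 1
        else s (inord i.-1) - s (inord i)) | i <- iota 0 n].

Fixpoint lexle (a b : seq 'Z_k) : bool :=
  match a, b with
  | [::], _ => true
  | _ :: _, [::] => false
  | x :: a', y :: b' => ((x : nat) < y)%N || ((x == y) && lexle a' b')
  end.

Definition minrot (d : seq 'Z_k) : seq 'Z_k :=
  foldl (fun mn r => if lexle r mn then r else mn) d
        [seq rot i d | i <- iota 0 (size d)].

Definition roteq (a b : seq 'Z_k) : bool :=
  has (fun i => rot i a == b) (iota 0 (size a)).

Definition DeltaU (U : {set str}) : seq 'Z_k :=
  if [pick s in U] is Some s then minrot (Delta s) else [::].

Definition parentArray (D : seq 'Z_k) : seq 'Z_k :=
  let i := find (fun x => x != 0) D in
  let j := (i.+1 %% size D)%N in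
  let D1 := set_nth 0 D i (nth 0 D i - 1) in
  set_nth 0 D1 j (nth 0 D1 j + 1).

(* parent(U): the set of all strings whose difference array is a rotation of A.
   "well defined" = this set is exactly one cycle of N. *)
Definition tparent (U : {set str}) : {set str} :=
  [set t | roteq (Delta t) (parentArray (DeltaU U))].

End ExplicitTree.

From mathcomp Require Import all_boot all_algebra order.
From mathcomp Require Import zify ring.
Set Implicit Arguments. Unset Strict Implicit. Unset Printing Implicit Defensive.
Import Order.TTheory GRing.Theory.
Local Open Scope ring_scope.

(* Cycles of ICR_1 are the rotation classes of difference arrays: Delta (ICR_1 s)
   is rot 1 (Delta s), two strings with the same difference array differ by a
   constant c, i.e. by ICR_1^(n c), and the difference arrays are exactly the
   arrays of length n summing to -1.  The parent array moves one unit from the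
   first nonzero entry i of Delta(U) to entry i+1; this keeps the sum, so it is
   the array of a cycle, and it is lexicographically smaller than Delta(U), hence
   so is its minimal rotation.  The parent map therefore strictly decreases the
   rank of Delta(U) until the first nonzero entry is the last one, i.e. until
   Delta(U) = 0^m (-1), the array of the root.  Finally ICR_0 s differs from
   ICR_1 s by subtracting 1 from the new last letter, which on difference arrays
   moves that unit back: this yields the arc (parent(U), U). *)

Section Rotations.
Variable T : Type.
Implicit Types a b c : seq T.

Definition rotated a b := exists r, b = rot r a.

Lemma rotated_refl a : rotated a a.
Proof. by exists 0%N; rewrite rot0. Qed.

Lemma rotated_sym a b : rotated a b -> rotated b a.
Proof. by case=> r ->; exists (size (rot r a) - r)%N; rewrite -/(rotr r _) rotK. Qed.

Lemma rotated_trans a b c : rotated a b -> rotated b c -> rotated a c.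
Proof. by case=> r1 -> [r2 ->]; exists (rot_add a r1 r2); rewrite rot_rot_add. Qed.

Lemma nth_rot x0 a r i : (r <= size a)%N -> (i < size a)%N ->
  nth x0 (rot r a) i = nth x0 a ((i + r) %% size a).
Proof.
move=> r_le i_lt; rewrite /rot nth_cat size_drop.
case: ltnP => i_cmp.
- by rewrite nth_drop modn_small ?[(r + i)%N]addnC //; lia.
- have -> : (i + r = (i - (size a - r)) + size a)%N by lia.
  by rewrite nth_take ?modnDr ?modn_small //; lia.
Qed.

End Rotations.

Section FoldMin.
Variables (T : eqType) (le : rel T).
Hypotheses (le_trans : transitive le) (le_total : total le).

Lemma foldl_min x0 L :
  let mn := foldl (fun mn r => if le r mn then r else mn) x0 L in
  mn \in x0 :: L /\ all (le mn) (x0 :: L).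
Proof.
elim: L x0 => [|y L IH] x0 /=.
  by rewrite inE eqxx andbT; case/orP: (le_total x0 x0).
set x1 := if le y x0 then y else x0.
have [x1_x0 x1_y] : le x1 x0 /\ le x1 y.
  rewrite /x1; case: ifP => [-> |]; first by case/orP: (le_total y y).
  by case/orP: (le_total x0 y) => -> //; case/orP: (le_total x0 x0).
have [/= mn_in /andP[mn_x1 mn_L]] := IH x1.
split.
- move: mn_in; rewrite !inE /x1; case: ifP => _ /orP[->|->]; by rewrite ?orbT.
- by rewrite mn_L (le_trans mn_x1 x1_x0) (le_trans mn_x1 x1_y).
Qed.

End FoldMin.

Lemma ltxi_nth (disp : Order.disp_t) (T : porderType disp) (x0 : T) (a b : seq T) i :
  (i < size a)%N -> (i < size b)%N ->
  (forall l, (l < i)%N -> nth x0 a l = nth x0 b l) -> (nth x0 a i < nth x0 b i)%O ->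
  (a < b :> seqlexi T)%O.
Proof.
elim: i a b => [|i IH] [|x a] [|y b] //= i_lt_a i_lt_b same_prefix lt_i.
- by rewrite ltxi_cons (ltW lt_i) lt_geF.
- have /= -> := same_prefix 0%N isT.
  by rewrite eqhead_ltxiE; apply: IH => // l; apply: (same_prefix l.+1).
Qed.

Lemma ltZp_subr1 p (x : 'Z_p) : (1 < p)%N -> x != 0 -> (x - 1 < x)%O.
Proof.
move=> p_gt1 x_neq0.
have x_gt0 : (0 < x)%N by rewrite lt0n; apply: contra x_neq0 => /eqP x0; apply/eqP/val_inj.
have x_lt : (x < p)%N by rewrite -[X in (_ < X)%N](Zp_cast p_gt1) ltn_ord.
have -> : x - 1 = (x.-1)%:R by rewrite -[X in X - 1]natr_Zp -(prednK x_gt0) -natr1 addrK.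
by rewrite ltEord /= val_Zp_nat // modn_small; lia.
Qed.

Section MinimalRotation.
Variable k : nat.
Implicit Types a b d : seq 'Z_k.

Lemma lexleE a b : lexle a b = (a <= b :> seqlexi 'Z_k)%O.
Proof.
elim: a b => [|x a IH] [|y b] //=; rewrite lexi_cons IH !leEord.
case: ltngtP => [| |/val_inj ->]; rewrite ?eqxx //=.
by move=> lt_yx; case: eqP lt_yx => // ->; rewrite ltnn.
Qed.

Lemma lexle_trans : transitive (@lexle k).
Proof. by move=> b a c; rewrite !lexleE; apply: le_trans. Qed.

Lemma lexle_total : total (@lexle k).
Proof. by move=> a b; rewrite !lexleE le_total. Qed.

Lemma rotatedP a b : (0 < size a)%N ->
  reflect (rotated a b) (roteq a b).
Proof.
move=> a_gt0; apply: (iffP hasP) => [[r _ /eqP <-]|[r ->]]; first by exists r.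
case: (ltnP r (size a)) => [r_lt|r_ge]; first by exists r; rewrite ?mem_iota.
by exists 0%N; rewrite ?mem_iota // rot0 rot_oversize.
Qed.

Lemma rotated_minrot d : rotated d (minrot d).
Proof.
have [] := foldl_min lexle_trans lexle_total d [seq rot i d | i <- iota 0 (size d)].
rewrite -/(minrot d) inE => /orP[/eqP ->|/mapP[r _ ->]] _; last by exists r.
exact: rotated_refl.
Qed.

Lemma minrot_le d e : rotated d e -> lexle (minrot d) e.
Proof.
have [_ /allP min_le] := foldl_min lexle_trans lexle_total d [seq rot i d | i <- iota 0 (size d)].
case=> r ->; case: (ltnP r (size d)) => [r_lt|r_ge].
  by apply: min_le; rewrite inE (map_f (fun i => rot i d)) ?orbT ?mem_iota.
by rewrite rot_oversize //; apply: min_le; rewrite mem_head.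
Qed.

Definition lex_rank n d := #|[pred t : n.-tuple 'Z_k | (t <= d :> seqlexi 'Z_k)%O]|.

Lemma lex_rank_lt n a b : size b = n -> (a < b :> seqlexi 'Z_k)%O ->
  (lex_rank n a < lex_rank n b)%N.
Proof.
move=> size_b lt_ab; apply/proper_card/properP; split.
  by apply/subsetP => t; rewrite !inE => /le_trans; apply; apply: ltW.
by exists (Tuple (introT eqP size_b)); rewrite !inE /= ?lexx // -ltNge.
Qed.

End MinimalRotation.

Section DifferenceArray.
Variables k m : nat.
Local Notation n := m.+1.
Implicit Types s t : str k m.

Lemma ord0_inord : (ord0 : 'I_n) = inord 0.
Proof. by apply: val_inj; rewrite /= inordK. Qed.

Lemma size_Delta s : size (Delta s) = n.
Proof. by rewrite size_map size_iota. Qed.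

Lemma nth_Delta s l : (l < n)%N ->
  nth 0 (Delta s) l = if l == 0%N then s (inord m) - s (inord 0) - 1
                      else s (inord l.-1) - s (inord l).
Proof. by move=> l_lt; rewrite (nth_map 0%N) ?size_iota // nth_iota // ord0_inord. Qed.

Lemma sum_Delta s : \sum_(x <- Delta s) x = -1.
Proof.
rewrite big_map (_ : iota 0 n = index_iota 0 n) // big_nat_recl //= ord0_inord.
rewrite (telescope_sumr_eq (fun i => - s (inord i))) => [|//|i _]; last by ring.
by ring.
Qed.

Lemma ICR_inord j s l : (l < n)%N ->
  ICR j s (inord l) = if (l < m)%N then s (inord l.+1) else s (inord 0) + j.
Proof. by move=> l_lt; rewrite ffunE inordK // -ord0_inord. Qed.

Lemma nth_Delta_ICR j s l : (l < n)%N ->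
  nth 0 (Delta (ICR j s)) l =
  nth 0 (rot 1 (Delta s)) l + (j - 1) *+ (l == 0%N) - (j - 1) *+ (l == m).
Proof.
move=> l_lt; rewrite nth_rot ?size_Delta // !nth_Delta ?ltn_mod //.
have [l_ltm|l_gem] := ltnP l m.
- rewrite modn_small ?addn1 /=; last by lia.
  rewrite (_ : l == m = false); last by apply/eqP; lia.
  case: eqP => [->|l_neq0]; rewrite !ICR_inord //= ?mulr1n ?mulr0n; try lia.
  + by rewrite ltnn (_ : (0 < m)%N) //; [ring|lia].
  + by rewrite (_ : (l.-1 < m)%N) ?l_ltm ?prednK //; [ring|lia|lia].
- have -> : l = m by lia.
  rewrite addn1 modnn !eqxx /= mulr1n !ICR_inord ?ltnn; try lia.
  case: (posnP m) => [m0|m_gt0].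
  + have inord_m0 : (inord m : 'I_n) = inord 0 by rewrite m0.
    by rewrite inord_m0 mulr1n; ring.
  + by rewrite (_ : (m.-1 < m)%N) ?prednK ?mulr0n; try lia; ring.
Qed.

Lemma Delta_ICR1 s : Delta (ICR 1 s) = rot 1 (Delta s).
Proof.
apply: (@eq_from_nth _ 0); first by rewrite size_rot !size_Delta.
by rewrite size_Delta => l l_lt; rewrite nth_Delta_ICR // subrr !mul0rn subr0 addr0.
Qed.

Lemma Delta_iter_ICR1 j s : Delta (iter j (ICR 1) s) = rot (j %% n) (Delta s).
Proof.
elim: j => [|j IH]; first by rewrite mod0n rot0.
have j_lt : (j %% n < n)%N by rewrite ltn_mod.
rewrite iterS Delta_ICR1 IH -rotD ?size_Delta // -[j.+1]add1n -modnDmr.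
case: (ltngtP (1 + j %% n) n) => [lt_n|gt_n|eq_n].
- by rewrite (modn_small lt_n).
- lia.
- by rewrite eq_n modnn rot0 -{1}(size_Delta s) rot_size.
Qed.

Lemma iter_ICR1_inord j s l : (j <= n)%N -> (l < n)%N ->
  iter j (ICR 1) s (inord l) =
  if (l + j < n)%N then s (inord (l + j)) else s (inord (l + j - n)) + 1.
Proof.
elim: j l => [|j IH] l j_lt l_lt; first by rewrite addn0 l_lt.
rewrite iterS ICR_inord //.
have [l_ltm|l_gem] := ltnP l m.
- by rewrite IH -?addSnnS // ltnW.
- have l_eq : l = m by lia.
  rewrite IH ?(ltnW j_lt) // add0n j_lt l_eq (_ : (m + j.+1 < n)%N = false); last by lia.
  by rewrite (_ : (m + j.+1 - n)%N = j) //; lia.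
Qed.

Lemma iter_ICR1_n s : iter n (ICR 1) s = [ffun i => s i + 1].
Proof.
apply/ffunP => i; rewrite [RHS]ffunE -[i]inord_val iter_ICR1_inord //.
by rewrite (_ : (i + n < n)%N = false) ?addnK //; lia.
Qed.

Lemma iter_ICR1_mul c s : iter (n * c) (ICR 1) s = [ffun i => s i + c%:R].
Proof.
elim: c => [|c IH]; first by apply/ffunP => i; rewrite muln0 ffunE addr0.
by apply/ffunP => i; rewrite mulnS iterD IH iter_ICR1_n !ffunE -natr1 addrA.
Qed.

Lemma Delta_eq_shift s t : Delta s = Delta t ->
  t = [ffun i => s i + (t (inord 0) - s (inord 0))].
Proof.
move=> eq_Delta.
have shift_const l : (l < n)%N -> t (inord l) - s (inord l) = t (inord 0) - s (inord 0).
  elim: l => [//|l IH] l_lt.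
  have := congr1 (nth 0 ^~ l.+1) eq_Delta; rewrite !nth_Delta //= => eq_l.
  have -> : t (inord l.+1) - s (inord l.+1) = t (inord l) - s (inord l)
      + ((s (inord l) - s (inord l.+1)) - (t (inord l) - t (inord l.+1))) by ring.
  by rewrite eq_l subrr addr0 IH // ltnW.
by apply/ffunP => i; rewrite ffunE -(shift_const i) ?inord_val //; ring.
Qed.

Lemma fconnect_Delta_eq s t : Delta s = Delta t -> fconnect (ICR 1) s t.
Proof.
move/Delta_eq_shift => ->; rewrite -[t _ - s _]natr_Zp -iter_ICR1_mul.
exact: fconnect_iter.
Qed.

Lemma mem_cycle_of s t : (t \in cycle_of s) = roteq (Delta s) (Delta t).
Proof.
rewrite inE; apply/idP/hasP => [/iter_findex <-|[r]].
  rewrite Delta_iter_ICR1; exists (findex (ICR 1%R) s t %% n)%N => //.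
  by rewrite mem_iota size_Delta ltn_mod.
rewrite mem_iota size_Delta => /andP[_ r_lt] /eqP eq_rot.
apply: connect_trans (fconnect_iter _ r s) (fconnect_Delta_eq _).
by rewrite Delta_iter_ICR1 modn_small.
Qed.

Lemma cycle_ofP s t : reflect (rotated (Delta s) (Delta t)) (t \in cycle_of s).
Proof. by rewrite mem_cycle_of; apply: rotatedP; rewrite size_Delta. Qed.

Lemma eq_cycle_of s t : rotated (Delta s) (Delta t) -> cycle_of s = cycle_of t.
Proof.
move=> st; apply/setP => x; apply/cycle_ofP/cycle_ofP; last exact: rotated_trans.
exact/rotated_trans/rotated_sym.
Qed.

Lemma Delta_surj (D : seq 'Z_k) : size D = n -> \sum_(x <- D) x = -1 ->
  exists s, Delta s = D.
Proof.
move=> size_D sum_D; pose f l := - \sum_(0 <= i < l) nth 0 D i.+1.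
exists [ffun i : 'I_n => f i]; apply: (@eq_from_nth _ 0); first by rewrite size_Delta.
rewrite size_Delta => l l_lt; rewrite nth_Delta // !ffunE /= !inordK //; last by lia.
case: l l_lt => [|l] l_lt /=.
- have -> : nth 0 D 0 = -1 - \sum_(0 <= i < m) nth 0 D i.+1.
    by rewrite -sum_D (big_nth 0) size_D big_nat_recl //=; ring.
  by rewrite /f (big_geq (leqnn 0)); ring.
- by rewrite /f big_nat_recr //=; ring.
Qed.

Lemma Delta_zero : Delta ([ffun => 0] : str k m) = -1 :: nseq m 0.
Proof.
apply: (@eq_from_nth _ 0); first by rewrite size_Delta /= size_nseq.
rewrite size_Delta => l l_lt; rewrite nth_Delta // !ffunE.
by case: l l_lt => [|l] l_lt /=; rewrite ?nth_nseq ?if_same subrr ?sub0r.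
Qed.

End DifferenceArray.

Lemma sum_set_nth (V : zmodType) (d : seq V) i y : (i < size d)%N ->
  \sum_(x <- set_nth 0 d i y) x = \sum_(x <- d) x - nth 0 d i + y.
Proof.
elim: d i => [|x d IH] [|i] //= i_lt; rewrite !big_cons; first by rewrite [x + _]addrC addrK addrC.
by rewrite IH // !addrA.
Qed.

Section ParentArray.
Variables (k : nat) (D : seq 'Z_k).
Local Notation i := (find (fun x => x != 0) D).
Hypothesis i_lt : (i.+1 < size D)%N.

Let parentArrayE :
  parentArray D = set_nth 0 (set_nth 0 D i (nth 0 D i - 1)) i.+1
                          (nth 0 (set_nth 0 D i (nth 0 D i - 1)) i.+1 + 1).
Proof. by rewrite /parentArray modn_small. Qed.

Lemma size_parentArray : size (parentArray D) = size D.
Proof. by rewrite parentArrayE !size_set_nth; lia. Qed.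

Lemma nth_parentArray p :
  nth 0 (parentArray D) p = nth 0 D p - (p == i)%:R + (p == i.+1)%:R.
Proof.
rewrite parentArrayE !nth_set_nth /= (gtn_eqF (ltnSn i)).
case: (eqVneq p i.+1) => [->|_]; first by rewrite (gtn_eqF (ltnSn i)) subr0.
by rewrite nth_set_nth /= addr0; case: eqP => [->|_]; rewrite ?subr0.
Qed.

Lemma sum_parentArray : \sum_(x <- parentArray D) x = \sum_(x <- D) x.
Proof.
rewrite parentArrayE !sum_set_nth ?size_set_nth ?leq_max ?(ltnW i_lt) ?i_lt ?orbT //.
by rewrite nth_set_nth /= (gtn_eqF (ltnSn i)); ring.
Qed.

Lemma parentArray_lt : (1 < k)%N -> (parentArray D < D :> seqlexi 'Z_k)%O.
Proof.
move=> k_gt1; apply: (@ltxi_nth _ 'Z_k 0 _ _ i); rewrite ?size_parentArray ?(ltnW i_lt) //.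
  by move=> l l_lt; rewrite nth_parentArray (ltn_eqF l_lt) (ltn_eqF (leqW l_lt)) subr0 addr0.
rewrite nth_parentArray eqxx (ltn_eqF (ltnSn i)) addr0.
apply: ltZp_subr1 => //; apply: (@nth_find _ 0 (fun x => x != 0)).
by rewrite has_find (ltnW i_lt).
Qed.

End ParentArray.

Section ExplicitTreeProof.
Variables k m : nat.
Local Notation n := m.+1.
Implicit Types s t u : str k m.

Lemma rotated_DeltaU s : rotated (Delta s) (DeltaU (cycle_of s)).
Proof.
rewrite /DeltaU; case: pickP => [u /cycle_ofP su|/(_ s)]; last by rewrite inE connect0.
exact: rotated_trans su (rotated_minrot _).
Qed.

Lemma size_DeltaU s : size (DeltaU (cycle_of s)) = n.
Proof. by have [r ->] := rotated_DeltaU s; rewrite size_rot size_Delta. Qed.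

Lemma sum_DeltaU s : \sum_(x <- DeltaU (cycle_of s)) x = -1.
Proof. by have [r ->] := rotated_DeltaU s; rewrite (perm_big (Delta s)) ?sum_Delta ?perm_rot. Qed.

Lemma DeltaU_le s : lexle (DeltaU (cycle_of s)) (Delta s).
Proof.
rewrite /DeltaU; case: pickP => [u /cycle_ofP su|/(_ s)]; last by rewrite inE connect0.
exact/minrot_le/rotated_sym.
Qed.

Lemma zero_prefix_rcons (D : seq 'Z_k) : size D = n -> \sum_(x <- D) x = -1 ->
  (m <= find (fun x => x != 0%R) D)%N -> D = rcons (nseq m 0) (-1).
Proof.
move=> size_D sum_D find_ge.
have zero_prefix l : (l < m)%N -> nth 0 D l = 0.
  move=> l_lt; apply/eqP/negbFE/(@before_find _ 0 (fun x => x != 0)).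
  exact: leq_trans find_ge.
apply: (@eq_from_nth _ 0); first by rewrite size_rcons size_nseq.
rewrite size_D => l l_lt; rewrite nth_rcons size_nseq.
case: (ltngtP l m) => [l_ltm|l_gtm|->].
- by rewrite nth_nseq l_ltm zero_prefix.
- by rewrite ltnS leqNgt l_gtm in l_lt.
rewrite -sum_D (big_nth 0) size_D big_nat_recr //= big1_seq ?add0r // => j.
by rewrite mem_index_iota => /andP[_]; apply: zero_prefix.
Qed.

Lemma cycle_of_Root s : (m <= find (fun x => x != 0%R) (DeltaU (cycle_of s)))%N ->
  cycle_of s = Root k m.
Proof.
move/(zero_prefix_rcons (size_DeltaU s) (sum_DeltaU s)) => DU_rcons.
apply: eq_cycle_of; apply: rotated_trans (rotated_DeltaU s) _.
by rewrite DU_rcons Delta_zero -rot1_cons; apply/rotated_sym; exists 1%N.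
Qed.

Lemma tparent_cycle_of (U : {set str k m}) t :
  Delta t = parentArray (DeltaU U) -> tparent U = cycle_of t.
Proof.
move=> Dt; apply/setP => x; rewrite inE -Dt.
apply/(rotatedP _ _)/cycle_ofP; rewrite ?size_Delta //; exact: rotated_sym.
Qed.

Lemma Delta_ICR0_parent (D : seq 'Z_k) s :
  let i := find (fun x => x != 0) D in
  size D = n -> (i < m)%N -> Delta s = rot i (parentArray D) ->
  Delta (ICR 0 s) = rot i.+1 D.
Proof.
move=> i size_D i_lt Ds.
have size_A : size (parentArray D) = n by rewrite size_parentArray ?size_D.
apply: (@eq_from_nth _ 0); first by rewrite size_rot size_Delta size_D.
rewrite size_Delta => l l_lt.
have i_le : (i.+1 <= n)%N by lia.
rewrite nth_Delta_ICR // Ds -rotD ?size_A // add1n !nth_rot ?size_A ?size_D //.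
rewrite nth_parentArray ?size_D //.
set p := ((l + i.+1) %% n)%N.
have p_def : p = if (l + i.+1 < n)%N then (l + i.+1)%N else (l + i.+1 - n)%N.
  rewrite /p; case: ifP => [/modn_small //|/negbT]; rewrite -leqNgt => n_le.
  by rewrite -(subnK n_le) modnDr modn_small; lia.
have -> : (p == i.+1) = (l == 0%N) by apply/eqP/eqP; rewrite p_def; case: ifP; lia.
have -> : (p == i) = (l == m) by apply/eqP/eqP; rewrite p_def; case: ifP; lia.
by rewrite sub0r !mulNrn; ring.
Qed.

Lemma Garc_parent u t :
  (find (fun x => x != 0%R) (DeltaU (cycle_of u)) < m)%N ->
  Delta t = parentArray (DeltaU (cycle_of u)) -> Garc (cycle_of t) (cycle_of u).
Proof.
set D := DeltaU _; set i := find _ D => i_lt Dt.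
have i_lt' : (i.+1 < size D)%N by rewrite size_DeltaU.
have size_rotA : size (rot i (parentArray D)) = n.
  by rewrite size_rot size_parentArray // size_DeltaU.
have sum_rotA : \sum_(x <- rot i (parentArray D)) x = -1.
  by rewrite (perm_big (parentArray D)) ?perm_rot // sum_parentArray // sum_DeltaU.
have [s Ds] := Delta_surj size_rotA sum_rotA.
apply/existsP; exists s; apply/andP; split; apply/cycle_ofP.
  by rewrite Dt Ds; exists i.
rewrite (Delta_ICR0_parent (size_DeltaU u) i_lt Ds).
by apply: rotated_trans (rotated_DeltaU u) _; exists i.+1.
Qed.

Lemma parent_step u : (1 < k)%N -> cycle_of u != Root k m ->
  exists t, [/\ tparent (cycle_of u) = cycle_of t, Garc (cycle_of t) (cycle_of u)
              & (lex_rank n (DeltaU (cycle_of t)) < lex_rank n (DeltaU (cycle_of u)))%N].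
Proof.
move=> k_gt1 not_root; set D := DeltaU _.
have i_lt : (find (fun x => x != 0%R) D < m)%N.
  by rewrite ltnNge; apply: contra not_root => /cycle_of_Root ->.
have i_lt' : ((find (fun x => x != 0%R) D).+1 < size D)%N by rewrite size_DeltaU.
have size_A : size (parentArray D) = n by rewrite size_parentArray // size_DeltaU.
have sum_A : \sum_(x <- parentArray D) x = -1 by rewrite sum_parentArray // sum_DeltaU.
have [t Dt] := Delta_surj size_A sum_A.
exists t; split; [exact: tparent_cycle_of | exact: Garc_parent |].
apply: lex_rank_lt (size_DeltaU u) _.
by apply: le_lt_trans (parentArray_lt i_lt' k_gt1); rewrite -lexleE -Dt DeltaU_le.
Qed.

Lemma iter_tparent_Root u : (1 < k)%N ->
  exists j, iter j (@tparent k m) (cycle_of u) = Root k m.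
Proof.
move=> k_gt1; have [N] := ubnP (lex_rank n (DeltaU (cycle_of u))).
elim: N u => // N IH u rank_lt.
have [->|not_root] := eqVneq (cycle_of u) (Root k m); first by exists 0%N.
have [t [parent_eq _ rank_t]] := parent_step k_gt1 not_root.
have [j iter_j] := IH t (leq_trans rank_t rank_lt).
by exists j.+1; rewrite iterSr parent_eq.
Qed.

End ExplicitTreeProof.

Theorem lemma14 (k m : nat) (hk : (1 < k)%N) :
  forall U : {set str k m}, U \in Ncycles k m -> U != Root k m ->
    [/\ tparent U \in Ncycles k m,
        Garc (tparent U) U
      & exists t : nat, iter t (@tparent k m) U = Root k m].
Proof.
move=> U /imsetP[u _ ->] not_root.
have [t [parent_eq arc _]] := parent_step hk not_root.
split; [by rewrite parent_eq imset_f ?inE | by rewrite parent_eq | exact: iter_tparent_Root].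
Qed.
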